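(* Let $\varphi\colon G\to G$ be an endomorphism of an abelian group $G$. If $S\leq G$ is a positive generator for $\varphi$, then $h_{\mathrm{alg}}(\varphi)=h_{\mathrm{alg}}(\varphi,S)$. Likewise, if $\varphi$ is an automorphism and $S\leq G$ is a generator for $\varphi$, then $h_{\mathrm{alg}}(\varphi)=h_{\mathrm{alg}}(\varphi,S)$. In particular, every positively expansive endomorphism and every expansive automorphism has finite algebraic entropy.
   Context: $\mathbb N=\{0,1,2,\dots\}$. A finite subgroup $S\leq G$ is a positive generator for an endomorphism $\varphi$ if for every finite subgroup $F\leq G$ there is $n\in\mathbb N$ with $F\subseteq\sum_{k=0}^n\varphi^kS$; $\varphi$ is positively expansive if it has a positive generator. For an automorphism $\varphi$, a finite subgroup $S$ is a generator if for every finite subgroup $F\leq G$ there is $n\in\mathbb N$ with $F\subseteq\sum_{|k|\leq n}\varphi^kS$; $\varphi$ is expansive if it has a generator. For a finite subgroup $F\leq G$, $h_{\mathrm{alg}}(\varphi,F)=\limsup_{n}\frac1n\log\bigl|\sum_{k=0}^{n-1}\varphi^kF\bigr|$, and $h_{\mathrm{alg}}(\varphi)=\sup_F h_{\mathrm{alg}}(\varphi,F)$, the supremum over all finite subgroups $F\leq G$. *)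

From HB Require Import structures.
From mathcomp Require Import all_boot all_order all_algebra.
From mathcomp Require Import finmap.
From mathcomp Require Import all_classical all_reals all_analysis.
Set Implicit Arguments. Unset Strict Implicit. Unset Printing Implicit Defensive.
Import Order.TTheory GRing.Theory Num.Theory.
Local Open Scope classical_set_scope.
Local Open Scope ring_scope.
Local Open Scope ereal_scope.
Local Open Scope ring_scope.

Section Defs.
Variable G : zmodType.

Definition fin_subgroup (F : set G) : Prop :=
  finite_set F /\ F 0 /\ (forall x y, F x -> F y -> F (x - y)).

Definition traj (phi : G -> G) (F : set G) (n : nat) : set G :=
  [set x | exists f : nat -> G,
     (forall k, (k < n)%N -> (iter k phi @` F) (f k)) /\
     x = \sum_(k < n) f k].

(* sum_{|k| <= n} phi^k S for a bijective phi; phi^(-k) S is the preimage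
   of S under phi^k *)
Definition traj2 (phi : G -> G) (S : set G) (n : nat) : set G :=
  [set x | exists f g : nat -> G,
     (forall k, (k <= n)%N -> (iter k phi @` S) (f k)) /\
     (forall k, (1 <= k <= n)%N -> (iter k phi @^-1` S) (g k)) /\
     x = \sum_(k < n.+1) f k + \sum_(1 <= k < n.+1) g k].

Definition positive_generator (phi : G -> G) (S : set G) : Prop :=
  fin_subgroup S /\
  forall F, fin_subgroup F -> exists n : nat, F `<=` traj phi S n.+1.

Definition positively_expansive (phi : G -> G) : Prop :=
  exists S, positive_generator phi S.

Definition generator (phi : G -> G) (S : set G) : Prop :=
  fin_subgroup S /\
  forall F, fin_subgroup F -> exists n : nat, F `<=` traj2 phi S n.

Definition expansive (phi : G -> G) : Prop := exists S, generator phi S.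

Variable R : realType.

Definition halgF (phi : G -> G) (F : set G) : \bar R :=
  limn_esup (fun n : nat =>
    ((ln ((#|` fset_set (traj phi F n)|)%fset%:R : R)) / n%:R)%:E).

Definition halg (phi : G -> G) : \bar R :=
  ereal_sup [set halgF phi F | F in fin_subgroup].

End Defs.

From HB Require Import structures.
From mathcomp Require Import all_boot all_order all_algebra.
From mathcomp Require Import finmap.
From mathcomp Require Import all_classical all_reals all_analysis.
From mathcomp Require Import zify.
Set Implicit Arguments. Unset Strict Implicit. Unset Printing Implicit Defensive.
Import Order.TTheory GRing.Theory Num.Theory.
Local Open Scope classical_set_scope.
Local Open Scope ring_scope.

(* If every finite subgroup F lies in T_(m+1)(phi, S), then T_n(phi, F) lies in
   T_(n+m)(phi, S); for a generator, phi^m maps T_n(phi, F) injectively into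
   T_(n+2m)(phi, S).  Either way |T_n(phi, F)| <= |T_(n+c)(phi, S)| for a fixed c.
   As |T_n(phi, S)| <= |S|^n, shifting the index by c changes
   log |T_n(phi, S)| / n by at most c log |S| / n, which vanishes in the limit;
   hence h(phi, F) <= h(phi, S) <= log |S|. *)

Section limn_esup_growth.
Variable R : realType.
Implicit Types (u v r x y : R^nat) (L : R).

Lemma limn_esup_le_cst u L : (forall n, u n <= L) ->
  (limn_esup (fun n => (u n)%:E) <= L%:E)%E.
Proof.
move=> uL; rewrite limn_esup_lim; apply: lime_le; first exact: is_cvg_esups.
by apply: nearW => N; apply: ge_ereal_sup => _ [n _ <-]; rewrite lee_fin.
Qed.

Lemma limn_esup_le_shift u v r (c : nat) : r @ \oo --> 0 ->
  (\forall n \near \oo, u n <= v (n + c) + r n) ->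
  (limn_esup (fun n => (u n)%:E) <= limn_esup (fun n => (v n)%:E))%E.
Proof.
move=> r0 uv; rewrite [X in (_ <= X)%E]limn_esup_lim (cvg_lim _ (@cvg_esups_inf _ _))//.
apply: le_ereal_inf_tmp => _ [N _ <-]; apply/lee_addgt0Pr => e e0.
have [M _ rM] := cvgr_dist_lt _ _ r0 _ e0.
have [M' _ uvM] := uv.
rewrite limn_esup_lim; apply: lime_le; first exact: is_cvg_esups.
exists (maxn N (maxn M M')) => // K /= NMK; apply: ge_ereal_sup => _ [n /= Kn <-].
have vN : ((v (n + c))%:E <= esups (fun n => (v n)%:E) N)%E.
  by apply: ereal_sup_ubound; exists (n + c)%N => //=; lia.
have reE : ((r n)%:E <= e%:E)%E.
  rewrite lee_fin (le_trans (ler_norm _)) // -normrN -sub0r ltW //.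
  by apply: rM => /=; lia.
by apply: le_trans (leeD vN reE); rewrite -EFinD lee_fin; apply: uvM => /=; lia.
Qed.

Lemma cvg_invn : (fun n : nat => n%:R^-1 : R) @ \oo --> 0.
Proof.
by rewrite -(@cvg_shiftS R^o (fun n : nat => n%:R^-1 : R) (nbhs 0)); exact: cvg_harmonic.
Qed.

Lemma limn_esup_div_le x y (c : nat) L :
  (forall n, y n <= n%:R * L) -> (forall n, x n <= y (n + c)) ->
  (limn_esup (fun n => (x n / n%:R)%:E) <= limn_esup (fun n => (y n / n%:R)%:E))%E.
Proof.
move=> yL xy; apply: (@limn_esup_le_shift _ _ (fun n => c%:R * L / n%:R) c).
  by rewrite -(mulr0 (c%:R * L)); apply: cvgMl_tmp; exact: cvg_invn.
exists 1%N => // n /= n1.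
have nc0 : (0 < n + c)%N by rewrite addn_gt0 n1.
set a := y (n + c) / (n + c)%:R.
have aL : a <= L by rewrite ler_pdivrMr ?ltr0n // mulrC.
have ya : y (n + c) = a * n%:R + a * c%:R by rewrite -mulrDr -natrD divfK ?pnatr_eq0 -?lt0n.
have n0 : n%:R != 0 :> R by rewrite pnatr_eq0 -lt0n.
rewrite ler_pdivrMr ?ltr0n // mulrDl (divfK n0).
by rewrite (le_trans (xy n)) // ya lerD2l mulrC ler_wpM2l.
Qed.

End limn_esup_growth.

Section fin_subgroup.
Variables (G : zmodType) (S : set G).
Hypothesis hS : fin_subgroup S.

Lemma fin_subgroup0 : S 0.
Proof. by case: hS => _ []. Qed.

Lemma fin_subgroupD x y : S x -> S y -> S (x + y).
Proof.
case: hS => _ [S0 SB] Sx Sy; rewrite -[y]opprK; apply: (SB) => //.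
by rewrite -sub0r; apply: SB.
Qed.

Lemma card_fin_subgroup_gt0 : (0 < #|` fset_set S|)%N.
Proof.
case: hS => finS _; rewrite cardfs_gt0; apply/fset0Pn; exists 0.
by rewrite in_fset_set // inE; exact: fin_subgroup0.
Qed.

End fin_subgroup.

Section iter_additive.
Variables (G : zmodType) (phi : {additive G -> G}).

Lemma iter_raddf0 k : iter k phi 0 = 0.
Proof. by elim: k => //= k ->; rewrite raddf0. Qed.

Lemma iter_raddfD k : {morph iter k phi : x y / x + y}.
Proof. by elim: k => // k IH x y /=; rewrite IH raddfD. Qed.

Lemma iter_raddf_sum k I (r : seq I) (P : pred I) (F : I -> G) :
  iter k phi (\sum_(i <- r | P i) F i) = \sum_(i <- r | P i) iter k phi (F i).
Proof. exact: (big_morph (iter k phi) (iter_raddfD k) (iter_raddf0 k)). Qed.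

Lemma iter_raddf_inj k : injective phi -> injective (iter k phi).
Proof. by move=> phi_inj; elim: k => //= k IH x y /phi_inj /IH. Qed.

End iter_additive.

Section traj.
Variables (G : zmodType) (phi : {additive G -> G}) (S : set G).
Hypothesis hS : fin_subgroup S.

Lemma traj0 n : traj phi S n 0.
Proof.
exists (fun=> 0); split; last by rewrite big1.
by move=> k _; exists 0; [exact: fin_subgroup0 | exact: iter_raddf0].
Qed.

Lemma trajD n x y : traj phi S n x -> traj phi S n y -> traj phi S n (x + y).
Proof.
move=> [f [hf ->]] [g [hg ->]]; exists (fun k => f k + g k); split; last first.
  by rewrite big_split.
move=> k kn; have [a Sa <-] := hf k kn; have [b Sb <-] := hg k kn.
by exists (a + b); [exact: fin_subgroupD | exact: iter_raddfD].
Qed.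

Lemma traj_sum n I (r : seq I) (P : pred I) (F : I -> G) :
  (forall i, P i -> traj phi S n (F i)) -> traj phi S n (\sum_(i <- r | P i) F i).
Proof. by move=> h; apply: big_ind => //; [exact: traj0 | exact: trajD]. Qed.

Lemma le_traj m n : (m <= n)%N -> traj phi S m `<=` traj phi S n.
Proof.
move=> mn _ [f [hf ->]]; exists (fun k => if (k < m)%N then f k else 0); split.
  move=> k kn; case: ifP => km; first exact: hf.
  by exists 0; [exact: fin_subgroup0 | exact: iter_raddf0].
by rewrite (big_ord_widen _ _ mn) big_mkcond.
Qed.

Lemma traj1 : S `<=` traj phi S 1.
Proof.
move=> x Sx; exists (fun=> x); split; last by rewrite big_ord1.
by move=> k; rewrite ltnS leqn0 => /eqP ->; exists x.
Qed.

Lemma traj_iter k n x : traj phi S n x -> traj phi S (k + n) (iter k phi x).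
Proof.
elim: k => // k IH /IH [f [hf fx]] /=; rewrite {}fx addSn.
exists (fun l => if l is l'.+1 then phi (f l') else 0); split.
  case=> [|l] ln; first by exists 0; [exact: fin_subgroup0 | ].
  by have [a Sa <-] := hf l ln; exists a.
by rewrite big_ord_recl add0r raddf_sum.
Qed.

Lemma image_traj_sub (psi : G -> G) (F : set G) m :
  {morph psi : x y / x + y} -> psi 0 = 0 ->
  (forall k x, psi (iter k phi x) = iter k phi (psi x)) ->
  psi @` F `<=` traj phi S m.+1 ->
  forall n, psi @` traj phi F n `<=` traj phi S (n + m).
Proof.
move=> psiD psi0 psi_phi psiF n _ [_ [f [hf ->]] <-].
rewrite (big_morph psi psiD psi0); apply: traj_sum => // k _.
have [y Fy <-] := hf k (ltn_ord k); rewrite psi_phi.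
apply: le_traj (traj_iter k (psiF _ (imageP psi Fy))) => //.
by have := ltn_ord k; lia.
Qed.

Lemma iter_traj2 m x : traj2 phi S m x -> traj phi S (m + m).+1 (iter m phi x).
Proof.
move=> [f [g [hf [hg ->]]]]; rewrite iter_raddfD !iter_raddf_sum big_nat_cond.
apply: trajD; apply: traj_sum.
  move=> k _; have [s Ss <-] := hf k (ltn_ord k); rewrite -iterD.
  apply: le_traj (traj_iter (m + k) (traj1 Ss)) => //.
  by have := ltn_ord k; lia.
move=> k /andP[/andP[k1 km] _].
have Sg : S (iter k phi (g k)) by apply: hg; rewrite k1 -ltnS.
rewrite -(subnK (km : k <= m)%N) iterD.
by apply: le_traj (traj_iter (m - k) (traj1 Sg)) => //; lia.
Qed.

End traj.

Section traj_card.
Variables (G : zmodType) (phi : {additive G -> G}) (S : set G).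
Hypothesis hS : fin_subgroup S.

Let finS : finite_set S. Proof. by case: hS. Qed.

Lemma traj_sub_fset n : exists2 X : {fset G},
  traj phi S n `<=` [set` X] & (#|` X| <= #|` fset_set S| ^ n)%N.
Proof.
pose h (t : {ffun 'I_n -> fset_set S}) := \sum_(k < n) iter k phi (val (t k)).
exists [fset x | x in map h (enum {: {ffun 'I_n -> fset_set S}})]%fset; last first.
  rewrite card_fseq (leq_trans (size_undup _)) // size_map -cardE card_ffun.
  by rewrite card_ord -cardfE.
move=> _ [f [hf ->]]; pose c (k : 'I_n) := cid2 (hf k (ltn_ord k)).
have cS (k : 'I_n) : s2val (c k) \in fset_set S.
  by rewrite in_fset_set // inE; case: (c k).
have -> : \sum_(k < n) f k = h [ffun k => [` cS k]%fset].
  by apply: eq_bigr => k _; rewrite ffunE /=; case: (c k).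
by apply/imfsetP; exists (h [ffun k => [` cS k]%fset]) => //; apply: map_f; rewrite mem_enum.
Qed.

Lemma finite_traj n : finite_set (traj phi S n).
Proof. by have [X sub _] := traj_sub_fset n; exact: sub_finite_set sub (finite_fset X). Qed.

Lemma card_traj_le n : (#|` fset_set (traj phi S n)| <= #|` fset_set S| ^ n)%N.
Proof.
have [X sub le_X] := traj_sub_fset n; apply: leq_trans le_X.
apply: fsubset_leq_card; rewrite -[Y in (_ `<=` Y)%fset]set_fsetK.
by rewrite -fset_set_sub //; exact: finite_traj.
Qed.

Lemma card_traj_gt0 n : (0 < #|` fset_set (traj phi S n)|)%N.
Proof.
rewrite cardfs_gt0; apply/fset0Pn; exists 0.
by rewrite in_fset_set; [apply/mem_set/traj0 | exact: finite_traj].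
Qed.

End traj_card.

Lemma leq_card_fset_set_inj (T U : choiceType) (A : set T) (B : set U) (psi : T -> U) :
  finite_set A -> finite_set B -> injective psi -> psi @` A `<=` B ->
  (#|` fset_set A| <= #|` fset_set B|)%N.
Proof.
move=> finA finB psi_inj AB.
have <- : #|` (psi @` fset_set A)%fset| = #|` fset_set A| by rewrite card_imfset.
rewrite -fset_set_image //.
by apply: fsubset_leq_card; rewrite -fset_set_sub //; exact: finite_image.
Qed.

Section entropy.
Variables (R : realType) (G : zmodType) (phi : {additive G -> G}).

Lemma ln_card_traj_le S n : fin_subgroup S ->
  ln (#|` fset_set (traj phi S n)|%:R : R) <= n%:R * ln #|` fset_set S|%:R.
Proof.
move=> hS; have S_gt0 := card_fin_subgroup_gt0 hS.
rewrite mulr_natl -lnXn ?ltr0n // -natrX ler_ln ?posrE ?ltr0n ?expn_gt0 ?S_gt0 //.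
  by rewrite ler_nat card_traj_le.
exact: card_traj_gt0.
Qed.

Lemma halgF_le_shift S F (psi : G -> G) c :
  fin_subgroup S -> fin_subgroup F -> injective psi ->
  (forall n, psi @` traj phi F n `<=` traj phi S (n + c)) ->
  (halgF R phi F <= halgF R phi S)%E.
Proof.
move=> hS hF psi_inj FS; apply: (@limn_esup_div_le _ _ _ c (ln #|` fset_set S|%:R)).
  by move=> n; exact: ln_card_traj_le.
move=> n; rewrite ler_ln ?posrE ?ltr0n ?card_traj_gt0 // ler_nat.
by apply: leq_card_fset_set_inj psi_inj (FS n); exact: finite_traj.
Qed.

Lemma halgF_lt_pinfty S : fin_subgroup S -> (halgF R phi S < +oo)%E.
Proof.
move=> hS; apply: le_lt_trans (limn_esup_le_cst (L := ln #|` fset_set S|%:R) _) (ltry _).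
case=> [|n]; first by rewrite invr0 mulr0 ln_ge0 // ler1n card_fin_subgroup_gt0.
by rewrite ler_pdivrMr ?ltr0n // mulrC ln_card_traj_le.
Qed.

Lemma halg_eq_halgF S : fin_subgroup S ->
  (forall F, fin_subgroup F -> (halgF R phi F <= halgF R phi S)%E) ->
  halg R phi = halgF R phi S.
Proof.
move=> hS le_S; apply/eqP; rewrite eq_le; apply/andP; split.
  by apply/ereal_supP => _ [F hF <-]; exact: le_S.
by apply: ereal_sup_ubound; exists S.
Qed.

Lemma halg_positive_generator S : positive_generator phi S ->
  halg R phi = halgF R phi S.
Proof.
move=> [hS gen]; apply: halg_eq_halgF => // F hF; have [m FS] := gen F hF.
apply: (@halgF_le_shift _ _ id m) => //.
by apply: image_traj_sub => //; rewrite image_id.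
Qed.

Lemma halg_generator S : injective phi -> generator phi S ->
  halg R phi = halgF R phi S.
Proof.
move=> phi_inj [hS gen]; apply: halg_eq_halgF => // F hF; have [m FS] := gen F hF.
apply: (@halgF_le_shift _ _ (iter m phi) (m + m)) => //; first exact: iter_raddf_inj.
apply: image_traj_sub => //; [exact: iter_raddfD | exact: iter_raddf0 | |].
  by move=> k x; rewrite -!iterD addnC.
by move=> _ [x Fx <-]; apply: iter_traj2 => //; exact: FS.
Qed.

End entropy.

Theorem theorem3p3 (R : realType) (G : zmodType) (phi : {additive G -> G}) :
  (forall S : set G, positive_generator phi S ->
     halg R phi = halgF R phi S) /\
  (bijective phi -> forall S : set G, generator phi S ->
     halg R phi = halgF R phi S) /\
  (positively_expansive phi -> (halg R phi < +oo)%E) /\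
  (bijective phi -> expansive phi -> (halg R phi < +oo)%E).
Proof.
split; first exact: halg_positive_generator.
split; first by move=> /bij_inj phi_inj S; exact: halg_generator.
split=> [[S posS] | /bij_inj phi_inj [S genS]].
  by rewrite (halg_positive_generator R posS); apply: halgF_lt_pinfty; case: posS.
by rewrite (halg_generator R phi_inj genS); apply: halgF_lt_pinfty; case: genS.
Qed.
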